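(* Let $n_1 \ge 3$ be an odd integer, $p$ a prime with $p \equiv 1 \pmod{n_1}$, $\omega = e^{2\pi\imath/p}$, $r$ a primitive root modulo $p$, and $\sigma$ the automorphism of $\mathbb{Q}(\omega)$ with $\sigma(\omega) = \omega^{r}$. Let $m = (p-1)/2$, $\alpha = \prod_{k=0}^{m-1}(1-\omega^{r^k})$, let $\lambda$ be an integer with $\lambda(r-1)\equiv 1 \pmod p$, $z = \omega^{\lambda}\alpha(1-\omega)$, and $x = \sum_{k=1}^{(p-1)/n_1}\sigma^{k n_1}(z)$. Then the $n_1\times n_1$ matrix $G_{n_1} = \frac{1}{p}\big[\sigma^{(i+j) \bmod n_1}(x)\big]_{i,j=0}^{n_1-1}$ (a circulant-type matrix whose rows are successive cyclic left shifts of $\frac1p(x,\sigma(x),\dots,\sigma^{n_1-1}(x))$) is unitary, i.e. $G_{n_1}G_{n_1}^{\dagger} = I_{n_1}$; equivalently, the lattice it generates is orthogonal.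
   Context: $x$ lies in the subfield $\mathbb{K}'$ of $\mathbb{Q}(\omega)$ fixed by $\sigma^{n_1}$, which has degree $n_1$ over $\mathbb{Q}$; $\sigma$ restricted to $\mathbb{K}'$ has order $n_1$, so $\sigma^{(i+j)\bmod n_1}(x) = \sigma^{i+j}(x)$. *)

From HB Require Import structures.
From mathcomp Require Import all_boot all_order all_algebra all_field.
Set Implicit Arguments. Unset Strict Implicit. Unset Printing Implicit Defensive.
Import Order.TTheory GRing.Theory Num.Theory.

Definition primitive_root_mod (p r : nat) : bool :=
  (r ^ p.-1 == 1 %[mod p]) &&
  [forall k : 'I_p.-1, (0 < k)%N ==> (r ^ k != 1 %[mod p])].

Local Open Scope ring_scope.

(* omega = e^{2 pi i / p} in the algebraic complex numbers:
   p.-root (-1) is the root of -1 with minimal nonnegative argument, i.e. e^{i pi/p}. *)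
Definition omega_p (p : nat) : algC := (p.-root (-1)) ^+ 2.

From HB Require Import structures.
From mathcomp Require Import all_boot all_order all_algebra all_field.
From mathcomp Require Import ring zify.
Set Implicit Arguments. Unset Strict Implicit. Unset Printing Implicit Defensive.
Import Order.TTheory GRing.Theory Num.Theory.
Local Open Scope ring_scope.

(* Exponents of omega live in 'F_p, where sigma acts as multiplication by the
   generator r of 'F_p^*.  Put u_e = (-1)^e sigma^e(omega) and
   beta = omega^lambda alpha.  Since sigma shifts the factors of alpha along the
   orbit {r^k} and r^((p-1)/2) = -1, sigma(alpha) = -omega^-1 alpha, which the
   choice of lambda turns into sigma(beta) = -beta; hence
   sigma^t(z) = beta ((-1)^t - u_t).  The number (p-1)/n1 of terms of x is even
   and n1 is odd, so the signs cancel and sigma^t(x) = -beta S_t, where S_t sums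
   u over the class of t modulo n1.  Moreover beta beta^* = alpha alpha^* is the
   product of the 1 - omega^y over all y <> 0, that is p.  The Gram entry (i, j)
   is therefore p^-1 sum_k S_(i+k) S_(j+k)^*, which regroups into the
   autocorrelations sum_e u_(i+e) u_(j+e)^* = (-1)^(i+j) (p [i = j mod p-1] - 1),
   because r^e (r^i - r^j) runs over all nonzero residues unless i = j mod p-1.
   The remaining -1's come with alternating signs and cancel, leaving p [i = j]. *)

Lemma big_nat_mul_split (R : Type) (idx : R) (op : Monoid.law idx) n k
    (F : nat -> R) :
  \big[op/idx]_(0 <= e < n * k) F e =
  \big[op/idx]_(0 <= a < n) \big[op/idx]_(0 <= i < k) F (i + a * k)%N.
Proof.
rewrite big_nat_mul; apply: eq_bigr => a _.
by rewrite mulSnr -{1}[(a * k)%N]add0n big_addn addKn.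
Qed.

Lemma sumr_nat_shift1 (V : zmodType) n (F : nat -> V) :
  F n = F 0%N -> \sum_(0 <= i < n) F i.+1 = \sum_(0 <= i < n) F i.
Proof.
move=> FnF0; apply: (addrI (F 0%N)).
by rewrite -big_nat_recl // big_nat_recr //= FnF0 addrC.
Qed.

Lemma sum_sign_even (R : pzRingType) n :
  ~~ odd n -> \sum_(0 <= k < n) (-1) ^+ k = 0 :> R.
Proof.
move=> /even_halfK n_eq; rewrite -{}n_eq -muln2 big_nat_mul_split big1 // => a _.
by rewrite big_ltn // big_nat1 /= add0n exprD expr1 mulN1r addrN.
Qed.

Lemma iter_raddf_sum (V : zmodType) (f : {additive V -> V}) t I (r : seq I)
    (P : pred I) (F : I -> V) :
  iter t f (\sum_(i <- r | P i) F i) = \sum_(i <- r | P i) iter t f (F i).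
Proof. by elim: t => //= t ->; rewrite raddf_sum. Qed.

Lemma big_prim_root_mul (R : Type) (idx : R) (op : Monoid.com_law idx)
    (K : finFieldType) n (x m : K) (F : K -> R) :
  #|K| = n.+1 -> n.-primitive_root x -> m != 0 ->
  \big[op/idx]_(e < n) F (x ^+ e * m) = \big[op/idx]_(y | y != 0) F y.
Proof.
move=> cardK x_prim m_nz; pose h (e : 'I_n) := x ^+ e * m.
have h_inj : injective h.
  move=> a b /(mulIf m_nz)/eqP; rewrite (eq_prim_root_expr x_prim).
  by rewrite !modn_small // => /eqP/val_inj.
have x_nz : x != 0 by rewrite (prim_root_eq0 x_prim) -lt0n (prim_order_gt0 x_prim).
have im_h : h @: [set: 'I_n] = [set~ 0].
  apply/eqP; rewrite eqEcard card_imset // cardsC1 cardsT card_ord cardK leqnn andbT.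
  by apply/subsetP => _ /imsetP[e _ ->]; rewrite in_setC1 mulf_neq0 ?expf_neq0.
transitivity (\big[op/idx]_(y in [set~ 0]) F y).
  rewrite -im_h big_imset; last by move=> a b _ _; apply: h_inj.
  by apply: eq_bigl => e; rewrite !inE.
by apply: eq_bigl => y; rewrite !inE.
Qed.

Lemma prim_root_half_expr (R : idomainType) n (x : R) :
  ~~ odd n -> n.-primitive_root x -> x ^+ n./2 = -1.
Proof.
move=> n_even x_prim; have n_gt0 := prim_order_gt0 x_prim.
have : (x ^+ n./2) ^+ 2 == 1 by rewrite -exprM muln2 even_halfK ?prim_expr_order.
rewrite sqrf_eq1 => /orP[|/eqP //]; rewrite -(prim_order_dvd x_prim).
move: (even_halfK n_even) => n_eq /dvdn_leq; lia.
Qed.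

Lemma eqn_mod_mul_split i j b n k : (i < k)%N -> (j < k)%N -> (b < n)%N ->
  (i == j + b * k %[mod n * k])%N = (i == j) && (b == 0)%N.
Proof.
move=> ik jk bn.
have bk : (b * k + k <= n * k)%N by rewrite -mulSnr leq_mul2r bn orbT.
rewrite !modn_small; [|lia|lia].
apply/eqP/andP => [ij|[/eqP-> /eqP->]]; last by rewrite mul0n addn0.
have b0 : b = 0%N by case: b ij {bk bn} => // b; rewrite mulSn; lia.
by subst b; rewrite mul0n addn0 in ij; rewrite ij.
Qed.

Lemma intr_Fp_eq_mod p (a b : int) :
  prime p -> (a = b %[mod p])%Z -> a%:~R = b%:~R :> 'F_p.
Proof.
move=> p_pr /eqP; rewrite eqz_mod_dvd => /dvdzP[q ab].
by apply/eqP; rewrite -subr_eq0 -intrB ab intrM -pmulrn (pchar_Fp_0 p_pr) mulr0.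
Qed.

Lemma eq_Fp_nat p a b : prime p -> ((a%:R : 'F_p) == b%:R) = (a == b %[mod p]).
Proof.
move=> p_pr; apply/eqP/eqP => [ab | ab]; first by rewrite -!(val_Fp_nat p_pr) ab.
by rewrite -(Fp_nat_mod p_pr) ab Fp_nat_mod.
Qed.

Lemma primitive_root_mod_Fp p r :
  prime p -> primitive_root_mod p r -> p.-1.-primitive_root (r%:R : 'F_p).
Proof.
move=> p_pr /andP[r_pow /forallP r_ord].
have Fp_eq1 k : ((r%:R : 'F_p) ^+ k == 1) = (r ^ k == 1 %[mod p]).
  by rewrite -natrX -[1 : 'F_p]/(1%:R) eq_Fp_nat.
have P_gt0 : (0 < p.-1)%N by rewrite -subn1 subn_gt0 prime_gt1.
have [m m_prim m_dvd] := prim_order_exists P_gt0 (eqP (etrans (Fp_eq1 _) r_pow)).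
suff m_eq : m = p.-1 by rewrite -m_eq.
apply/eqP; rewrite eqn_leq dvdn_leq // leqNgt; apply/negP => m_lt.
have := r_ord (Ordinal m_lt); rewrite /= (prim_order_gt0 m_prim) -Fp_eq1.
by rewrite prim_expr_order ?eqxx.
Qed.

Lemma omega_p_prim p : prime p -> p.-primitive_root (omega_p p).
Proof.
move=> p_pr; have p_gt1 := prime_gt1 p_pr; have p_gt0 := ltnW p_gt1.
have rho_p : (p.-root (-1 : algC)) ^+ p = -1 by rewrite rootCK.
have omega1 : omega_p p ^+ p = 1 by rewrite /omega_p exprAC rho_p sqrrN expr1n.
have [m m_prim m_dvd] := prim_order_exists p_gt0 omega1.
case/primeP: p_pr => _ /(_ m m_dvd)/pred2P[m1|mp]; last by rewrite mp in m_prim.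
move: m_prim; rewrite m1 => /prim_expr_order; rewrite expr1 => /eqP.
rewrite sqrf_eq1 => /orP[/eqP rho1 | /eqP rhoN1].
  by move: rho_p; rewrite rho1 expr1n => /eqP; rewrite -subr_eq0 opprK (pnatr_eq0 _ 2).
by have := rootC_lt0 (-1 : algC) p_gt1; rewrite rhoN1 ltrN10.
Qed.

Lemma conjC_unity_root n (w : algC) : (0 < n)%N -> w ^+ n = 1 -> w^* = w^-1.
Proof.
move=> n_gt0 wn1; have /eqP : `|w| ^+ n = 1 by rewrite -normrX wn1 normr1.
by rewrite pexpr_eq1 // => /eqP w_norm; rewrite invC_norm w_norm expr1n invr1 mul1r.
Qed.

Section Character.

Variables (p : nat) (w : algC).
Hypotheses (p_pr : prime p) (w_prim : p.-primitive_root w).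

Definition psi (y : 'F_p) : algC := w ^+ y.

Let w_neq1 : w != 1.
Proof. by rewrite -[w]expr1 -(prim_order_dvd w_prim) dvdn1 gtn_eqF ?prime_gt1. Qed.

Lemma psi_natr n : psi n%:R = w ^+ n.
Proof. by rewrite /psi val_Fp_nat // prim_expr_mod. Qed.

Lemma psiD a b : psi (a + b) = psi a * psi b.
Proof. by rewrite -[a]natr_Zp -[b]natr_Zp -natrD !psi_natr exprD. Qed.

Lemma psi0 : psi 0 = 1.
Proof. by rewrite -(mulr0n 1) psi_natr. Qed.

Lemma psi1 : psi 1 = w.
Proof. by rewrite -(mulr1n 1) psi_natr. Qed.

Lemma psiN y : psi (- y) = (psi y)^-1.
Proof. by apply/esym/mulr1_eq; rewrite -psiD addrN psi0. Qed.

Lemma conjC_psi y : (psi y)^* = psi (- y).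
Proof.
have w_conj := conjC_unity_root (prime_gt0 p_pr) (prim_expr_order w_prim).
by rewrite psiN /psi rmorphXn /= w_conj exprVn.
Qed.

Lemma expz_psi (k : int) : w ^ k = psi k%:~R.
Proof.
case: k => n; first by rewrite -pmulrn psi_natr.
by rewrite NegzE -exprnN mulrNz -pmulrn psiN psi_natr.
Qed.

Lemma rmorph_psi (f : {rmorphism algC -> algC}) r :
  f w = w ^+ r -> forall y, f (psi y) = psi (r%:R * y).
Proof.
move=> fw y; rewrite -[y in LHS]natr_Zp psi_natr rmorphXn fw -exprM.
by rewrite -psi_natr natrM natr_Zp.
Qed.

Lemma big_Fp (R : Type) (idx : R) (op : R -> R -> R) (F : nat -> R) :
  \big[op/idx]_(y : 'F_p) F y = \big[op/idx]_(i < p) F i.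
Proof. by rewrite -[in RHS](Fp_cast p_pr). Qed.

Lemma sum_psi : \sum_(y : 'F_p) psi y = 0.
Proof.
apply: (mulfI (_ : w - 1 != 0)); first by rewrite subr_eq0.
by rewrite (big_Fp _ _ (fun i => w ^+ i)) -subrX1 prim_expr_order // subrr mulr0.
Qed.

Lemma prod_one_sub_psi : \prod_(y | y != 0) (1 - psi y) = p%:R.
Proof.
have X1_nz : ('X - 1 : {poly algC}) != 0 by rewrite -polyC1 polyXsubC_eq0.
have : ('X - 1) * \prod_(y | y != 0) ('X - (psi y)%:P) = ('X - 1) * \sum_(i < p) 'X^i.
  rewrite -subrX1 -(factor_Xn_sub_1 w_prim) big_mkord.
  by rewrite -(big_Fp _ _ (fun i => 'X - (w ^+ i)%:P)) [RHS](bigD1 0) //= expr0 polyC1.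
move/(mulfI X1_nz)/(congr1 (horner^~ 1)); rewrite horner_prod horner_sum.
under eq_bigr do rewrite hornerXsubC.
by under [in RHS]eq_bigr do rewrite hornerXn expr1n; rewrite sumr_const card_ord.
Qed.

Section PrimitiveRootSums.

Variable x : 'F_p.
Hypotheses (x_prim : p.-1.-primitive_root x) (p_odd : odd p).

Let card_Fp_pred : #|'F_p| = p.-1.+1.
Proof. by rewrite card_Fp // prednK // prime_gt0. Qed.

Let P_even : ~~ odd p.-1.
Proof. by move: p_odd; rewrite -(prednK (prime_gt0 p_pr)). Qed.

Let x_half : x ^+ p.-1./2 = -1 := prim_root_half_expr P_even x_prim.

Lemma sum_psi_prim_root_mul m :
  \sum_(e < p.-1) psi (x ^+ e * m) = (m == 0)%:R * p%:R - 1.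
Proof.
have [->|m_nz] := eqVneq m 0.
  under eq_bigr do rewrite mulr0 psi0.
  by rewrite sumr_const card_ord mul1r -{2}(prednK (prime_gt0 p_pr)) mulrSr addrK.
rewrite (big_prim_root_mul _ psi card_Fp_pred x_prim m_nz) mul0r sub0r.
have := sum_psi; rewrite (bigD1 0) //= psi0 => /eqP.
by rewrite addrC addr_eq0 => /eqP.
Qed.

Lemma prod_one_sub_psi_prim_root : \prod_(e < p.-1) (1 - psi (x ^+ e)) = p%:R.
Proof.
under eq_bigr do rewrite -[x ^+ _]mulr1.
rewrite (big_prim_root_mul _ (fun y => 1 - psi y) card_Fp_pred x_prim) ?oner_neq0 //.
exact: prod_one_sub_psi.
Qed.

Definition alpha := \prod_(k < p.-1./2) (1 - psi (x ^+ k)).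

Lemma alpha_mul_conjC : alpha * alpha^* = p%:R.
Proof.
rewrite -prod_one_sub_psi_prim_root -(even_halfK P_even) -addnn big_split_ord /=.
congr (_ * _); rewrite /alpha rmorph_prod; apply: eq_bigr => k _.
by rewrite rmorphB rmorph1 /= conjC_psi exprD x_half mulN1r.
Qed.

(* (-1)^e sigma^e(omega), once sigma acts on exponents as multiplication by x *)
Definition sconj e : algC := (-1) ^+ e * psi (x ^+ e).

Lemma sconj_addP e : sconj (e + p.-1) = sconj e.
Proof.
rewrite /sconj !exprD (prim_expr_order x_prim) mulr1.
by rewrite -[(-1) ^+ p.-1]signr_odd (negPf P_even) mulr1.
Qed.

Lemma sum_sconj_mul_conjC i j :
  \sum_(0 <= e < p.-1) sconj (i + e) * (sconj (j + e))^* =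
  (-1) ^+ (i + j) * ((i == j %[mod p.-1])%:R * p%:R - 1).
Proof.
have term e : sconj (i + e) * (sconj (j + e))^* =
    (-1) ^+ (i + j) * psi (x ^+ e * (x ^+ i - x ^+ j)).
  rewrite /sconj rmorphM rmorph_sign /= conjC_psi mulrACA -exprD -psiD.
  have -> : (i + e + (j + e) = i + j + (e + e))%N by lia.
  rewrite exprD -[(-1) ^+ (e + e)]signr_odd addnn odd_double mulr1.
  by congr (_ * psi _); rewrite !exprD; ring.
under eq_bigr do rewrite term.
rewrite -mulr_sumr big_mkord sum_psi_prim_root_mul subr_eq0.
by rewrite (eq_prim_root_expr x_prim).
Qed.

Section Gram.

Variables (n1 : nat) (sigma : {rmorphism algC -> algC}) (l : 'F_p).
Hypotheses (n1_odd : odd n1) (n1_dvd : (n1 %| p.-1)%N).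
Hypotheses (sigma_psi : forall y, sigma (psi y) = psi (x * y)) (l_fix : l * x = l + 1).

Local Notation N := (p.-1 %/ n1)%N.

Let N_n1 : (N * n1)%N = p.-1 := divnK n1_dvd.

Let N_even : ~~ odd N.
Proof. by move: P_even; rewrite -{1}N_n1 oddM n1_odd andbT. Qed.

Let N_gt0 : (0 < N)%N.
Proof. by rewrite divn_gt0 ?odd_gt0 // dvdn_leq // -subn1 subn_gt0 prime_gt1. Qed.

Let signr_mul_n1 b : (-1) ^+ (b * n1) = (-1) ^+ b :> algC.
Proof. by rewrite -signr_odd oddM n1_odd andbT signr_odd. Qed.

Definition speriod t := \sum_(0 <= a < N) sconj (t + a * n1).

Lemma speriod_addn_mul t a : speriod (t + a * n1) = speriod t.
Proof.
have step s : speriod (s + n1) = speriod s.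
  rewrite /speriod; transitivity (\sum_(0 <= a < N) sconj (s + a.+1 * n1)).
    by apply: eq_bigr => b _; rewrite mulSnr addnA addnAC.
  apply: (sumr_nat_shift1 (F := fun a => sconj (s + a * n1))).
  by rewrite divnK // sconj_addP mul0n addn0.
by elim: a => [|a IH]; rewrite ?addn0 // mulSnr addnA step.
Qed.

Lemma speriod_modn t : speriod (t %% n1) = speriod t.
Proof. by rewrite {2}(divn_eq t n1) addnC speriod_addn_mul. Qed.

Lemma sum_speriod_mul_conjC i j : (i < n1)%N -> (j < n1)%N ->
  \sum_(0 <= k < n1) speriod (i + k) * (speriod (j + k))^* = (i == j)%:R * p%:R.
Proof.
move=> i_lt j_lt.
transitivity (\sum_(0 <= e < p.-1) sconj (i + e) * (speriod (j + e))^*).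
  rewrite -N_n1 big_nat_mul_split exchange_big_nat; apply: eq_bigr => k _.
  rewrite [speriod (i + k)]/speriod mulr_suml; apply: eq_bigr => a _.
  by rewrite !addnA speriod_addn_mul.
under eq_bigr do rewrite rmorph_sum mulr_sumr.
rewrite exchange_big_nat /=.
transitivity (\sum_(0 <= b < N) (-1) ^+ (i + j) *
    ((-1) ^+ b * (((i == j) && (b == 0%N))%:R * p%:R - 1)) : algC).
  apply: eq_big_nat => b /andP[_ b_lt].
  under eq_bigr do rewrite addnAC.
  rewrite sum_sconj_mul_conjC -N_n1 eqn_mod_mul_split //.
  by rewrite addnA exprD signr_mul_n1 mulrA.
under eq_bigr do rewrite mulrBr mulr1.
rewrite -mulr_sumr sumrB sum_sign_even // subr0 big_ltn // [X in _ + X]big1_seq.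
  rewrite expr0 mul1r addr0 andbT.
  have [<-|_] := eqVneq i j; last by rewrite !mul0r mulr0.
  by rewrite addnn -signr_odd odd_double mul1r.
move=> b; rewrite mem_index_iota => /and3P[_ b_gt0 _].
by rewrite (gtn_eqF b_gt0) andbF mul0r mulr0.
Qed.

Lemma sigma_alpha : sigma alpha = - psi (-1) * alpha.
Proof.
apply: (mulfI (_ : 1 - psi 1 != 0)); first by rewrite subr_eq0 eq_sym psi1.
have -> : (1 - psi 1) * sigma alpha = \prod_(k < (p.-1./2).+1) (1 - psi (x ^+ k)).
  rewrite big_ord_recl expr0 rmorph_prod; congr (_ * _); apply: eq_bigr => k _.
  by rewrite rmorphB rmorph1 sigma_psi -exprS.
have psiN1 : 1 - psi (-1) = - psi (-1) * (1 - psi 1).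
  by rewrite mulNr mulrBr mulr1 opprB -psiD addNr psi0.
by rewrite big_ord_recr /= x_half -/alpha psiN1; ring.
Qed.

Definition beta := psi l * alpha.

Lemma sigma_beta : sigma beta = - beta.
Proof.
rewrite rmorphM sigma_psi sigma_alpha mulNr mulrN mulrA -psiD.
by rewrite [x * l]mulrC l_fix addrK.
Qed.

Lemma beta_mul_conjC : beta * beta^* = p%:R.
Proof.
by rewrite rmorphM /= conjC_psi mulrACA -psiD addrN psi0 mul1r alpha_mul_conjC.
Qed.

Lemma iter_sigma_z t :
  iter t sigma (beta * (1 - psi 1)) = beta * ((-1) ^+ t - sconj t).
Proof.
elim: t => [|t IH]; first by rewrite /sconj !expr0 mul1r.
rewrite iterS IH rmorphM sigma_beta rmorphB rmorph_sign /sconj rmorphM rmorph_sign.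
by rewrite sigma_psi !exprS; ring.
Qed.

Lemma iter_sigma_x t :
  iter t sigma (\sum_(1 <= k < N.+1) iter (k * n1) sigma (beta * (1 - psi 1))) =
  - beta * speriod t.
Proof.
rewrite iter_raddf_sum big_add1 /=.
under eq_bigr do rewrite -iterD iter_sigma_z.
have signs : \sum_(0 <= k < N) (-1) ^+ (t + k.+1 * n1) = 0 :> algC.
  under eq_bigr do rewrite exprD signr_mul_n1.
  rewrite -mulr_sumr (sumr_nat_shift1 (F := fun k => (-1) ^+ k)).
    by rewrite sum_sign_even ?mulr0.
  by rewrite -signr_odd (negPf N_even).
have periods : \sum_(0 <= k < N) sconj (t + k.+1 * n1) = speriod t.
  apply: (sumr_nat_shift1 (F := fun k => sconj (t + k * n1))).
  by rewrite divnK // sconj_addP mul0n addn0.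
by rewrite -mulr_sumr sumrB signs periods sub0r mulrN mulNr.
Qed.

Lemma circulant_mul_adjoint :
  let G : 'M[algC]_n1 := \matrix_(i < n1, j < n1) ((p%:R)^-1 *
    iter ((i + j) %% n1) sigma
      (\sum_(1 <= k < N.+1) iter (k * n1) sigma (beta * (1 - psi 1)))) in
  G *m (map_mx (fun a => a^*) G)^T = 1%:M.
Proof.
move=> G; apply/matrixP => i j; rewrite !mxE.
have p_nz : p%:R != 0 :> algC by rewrite pnatr_eq0 -lt0n prime_gt0.
transitivity (\sum_(k < n1) ((p%:R)^-1 * (p%:R)^-1 * (beta * beta^*)) *
    (speriod (i + k) * (speriod (j + k))^*)).
  apply: eq_bigr => k _; rewrite !mxE !iter_sigma_x !speriod_modn.
  by rewrite (rmorphM _ _^-1) (rmorphM _ (- _)) rmorphN /= fmorphV rmorph_nat; ring.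
rewrite -mulr_sumr beta_mul_conjC.
rewrite -(big_mkord xpredT (fun k => speriod (i + k) * (speriod (j + k))^*)).
by rewrite sum_speriod_mul_conjC //; field.
Qed.

End Gram.

End PrimitiveRootSums.

End Character.

Theorem mainTheorem3 (n1 p r : nat) (lambda : int)
  (sigma : {rmorphism algC -> algC})
  (hn1 : (3 <= n1)%N) (hodd : odd n1)
  (hp : prime p) (hpmod : p = 1 %[mod n1])
  (hr : primitive_root_mod p r)
  (hlam : (lambda * (r%:Z - 1) = 1 %[mod p%:Z])%Z)
  (hsigma : sigma (omega_p p) = omega_p p ^+ r) :
  let omega := omega_p p in
  let m := p.-1./2 in
  let alpha := \prod_(k < m) (1 - omega ^+ (r ^ k)) in
  let z := omega ^ lambda * alpha * (1 - omega) in
  let x := \sum_(1 <= k < (p.-1 %/ n1).+1) iter (k * n1) sigma z in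
  let G : 'M[algC]_n1 :=
    \matrix_(i < n1, j < n1) ((p%:R)^-1 * iter ((i + j) %% n1) sigma x) in
  G *m (map_mx (fun a => a^*) G)^T = 1%:M.
Proof.
have p_odd : odd p.
  by case: (even_prime hp) => // p2; move: hpmod; rewrite p2 !modn_small //; lia.
have n1_dvd : (n1 %| p.-1)%N by rewrite -subn1 -eqn_mod_dvd ?prime_gt0 //; apply/eqP.
have w_prim := omega_p_prim hp.
have x_prim := primitive_root_mod_Fp hp hr.
have l_fix : lambda%:~R * r%:R = lambda%:~R + 1 :> 'F_p.
  move: (intr_Fp_eq_mod hp hlam); rewrite intrM intrB -pmulrn mulrBr mulr1 => /eqP.
  by rewrite mulr1z subr_eq addrC => /eqP.
have sigma_psi := rmorph_psi hp w_prim hsigma.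
have z_eq : omega_p p ^ lambda * \prod_(k < p.-1./2) (1 - omega_p p ^+ (r ^ k)) *
    (1 - omega_p p) =
    beta (omega_p p) (r%:R : 'F_p) lambda%:~R * (1 - psi (omega_p p) (1 : 'F_p)).
  rewrite /beta /alpha (psi1 hp w_prim) (expz_psi hp w_prim); congr (_ * _ * _).
  by apply: eq_bigr => k _; rewrite -(psi_natr hp w_prim) natrX.
rewrite /= z_eq.
exact: (circulant_mul_adjoint hp w_prim x_prim p_odd hodd n1_dvd sigma_psi l_fix).
Qed.
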